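(* Let $\Lambda$ be a finite, strongly connected $k$-graph with no sources, and let $p$ be a probability measure on $\Lambda^\infty$ such that (a) the standard prefixing maps $\sigma_\lambda$ ($\lambda\in\Lambda$) and coding maps $\sigma^n$ ($n\in\mathbb N^k$) are measurable; (b) $p(Z(v))>0$ for every $v\in\Lambda^0$; (c) for every edge $\lambda$ (i.e. $\lambda\in\Lambda^{e_i}$ for some $i$), $p\circ\sigma_\lambda\ll p$ on $Z(s(\lambda))$ and the Radon–Nikodym derivative $\Phi_{\sigma_\lambda}=d(p\circ\sigma_\lambda)/dp$ is strictly positive $p$-a.e. on $Z(s(\lambda))$. Then the sets $D_\lambda=Z(s(\lambda))$, the maps $\sigma_\lambda$ and the maps $\sigma^n$ form a $\Lambda$-semibranching function system on $(\Lambda^\infty,p)$.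
   Context: $k$-graph: countable small category $\Lambda$ with degree functor $d:\Lambda\to\mathbb N^k$ with unique factorization; vertices $\Lambda^0$, range/source $r,s$; finite (each $\Lambda^n$ finite), no sources, strongly connected ($v\Lambda w\neq\emptyset$ for all vertices). $\Lambda^\infty$: infinite paths, i.e. degree-preserving functors $x:\Omega_k\to\Lambda$ ($\Omega_k$: morphisms $(p,q)$, $p\le q$ in $\mathbb N^k$, $d(p,q)=q-p$), $r(x)=x(0,0)$; cylinder sets $Z(\lambda)=\{x:x(0,d(\lambda))=\lambda\}$ form a compact open basis, with associated Borel $\sigma$-algebra. Standard coding maps: $\sigma^m(x)(p,q)=x(p+m,q+m)$. Standard prefixing maps: $\sigma_\lambda:Z(s(\lambda))\to Z(\lambda)$, $\sigma_\lambda(x)=\lambda x$, the unique infinite path with $(\lambda x)(0,d(\lambda))=\lambda$ and $\sigma^{d(\lambda)}(\lambda x)=x$. A semibranching function system on $(X,\mu)$ is a finite family of measurable maps $\tau_i:D_i\to X$, $R_i=\tau_i(D_i)$, with $\mu(X\setminus\bigcup R_i)=0$, $\mu(R_i\cap R_j)=0$ ($i\ne j$), and $d(\mu\circ\tau_i)/d\mu>0$ a.e. on $D_i$; $\tau$ is a coding map if $\tau\circ\tau_i=\mathrm{id}_{D_i}$. A $\Lambda$-semibranching function system on $(X,\mu)$: sets $D_\lambda$, prefixing maps $\tau_\lambda:D_\lambda\to X$, coding maps $\tau^m$ with (a) each $\{\tau_\lambda\}_{\lambda\in\Lambda^m}$ a semibranching function system with coding map $\tau^m$; (b) $\tau_v=\mathrm{id}$,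 $\mu(D_v)>0$; (c) $R_\nu\subseteq D_\lambda$ a.e. and $\tau_\lambda\tau_\nu=\tau_{\lambda\nu}$ a.e. for $\nu\in s(\lambda)\Lambda$; (d) $\tau^m\tau^n=\tau^{m+n}$. *)

From HB Require Import structures.
From mathcomp Require Import all_boot all_order all_algebra.
From mathcomp Require Import all_classical all_reals all_analysis.
From mathcomp Require Import measurable_realfun.

Set Implicit Arguments.
Unset Strict Implicit.
Unset Printing Implicit Defensive.

Import Order.TTheory GRing.Theory Num.Theory.
Local Open Scope classical_set_scope.
Local Open Scope ring_scope.

Definition NN (k : nat) := 'I_k -> nat.
Definition dzero (k : nat) : NN k := fun _ => 0%N.
Definition dadd (k : nat) (m n : NN k) : NN k := fun i => (m i + n i)%N.
Definition evec (k : nat) (i : 'I_k) : NN k := fun j => nat_of_bool (j == i).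

Lemma daddAC (k : nat) (p m n : NN k) :
  dadd (dadd p m) n = dadd (dadd p n) m.
Proof.
apply: functional_extensionality_dep => i; rewrite /dadd.
by rewrite addnAC.
Qed.

(* kcomp a b is the composite "a b" (a after b, s a = r b); it is only  *)
(* meaningful for composable pairs.                                    *)
Record kgraph (k : nat) := KGraph {
  kvert : Type;
  kpath : Type;
  krng : kpath -> kvert;
  ksrc : kpath -> kvert;
  kcomp : kpath -> kpath -> kpath;
  kvid : kvert -> kpath;
  kdeg : kpath -> NN k;
  path_countable : exists f : kpath -> nat, injective f;
  rng_vid : forall v, krng (kvid v) = v;
  src_vid : forall v, ksrc (kvid v) = v;
  rng_comp : forall a b, ksrc a = krng b -> krng (kcomp a b) = krng a;
  src_comp : forall a b, ksrc a = krng b -> ksrc (kcomp a b) = ksrc b;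
  comp_vidl : forall a, kcomp (kvid (krng a)) a = a;
  comp_vidr : forall a, kcomp a (kvid (ksrc a)) = a;
  compA : forall a b c, ksrc a = krng b -> ksrc b = krng c ->
            kcomp a (kcomp b c) = kcomp (kcomp a b) c;
  deg_vid : forall v, kdeg (kvid v) = @dzero k;
  deg_comp : forall a b, ksrc a = krng b -> kdeg (kcomp a b) = dadd (kdeg a) (kdeg b);
  unique_factorization : forall a (m n : NN k), kdeg a = dadd m n ->
     exists! bc : kpath * kpath,
       [/\ ksrc bc.1 = krng bc.2, kdeg bc.1 = m, kdeg bc.2 = n & a = kcomp bc.1 bc.2]
}.

Arguments krng {k} _ _.
Arguments ksrc {k} _ _.
Arguments kcomp {k} _ _ _.
Arguments kvid {k} _ _.
Arguments kdeg {k} _ _.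

Section KGraphProps.
Variables (k : nat) (L : kgraph k).

Definition kg_finite : Prop :=
  forall n : NN k, finite_set [set a : kpath L | kdeg L a = n].

Definition kg_no_sources : Prop :=
  forall (v : kvert L) (n : NN k), exists a : kpath L, krng L a = v /\ kdeg L a = n.

Definition kg_strongly_connected : Prop :=
  forall v w : kvert L, exists a : kpath L, krng L a = v /\ ksrc L a = w.

Definition kg_edge (a : kpath L) : Prop := exists i : 'I_k, kdeg L a = evec i.

(* Infinite paths: degree-preserving functors x : Omega_k -> Lambda.   *)
(* A morphism (p, q), p <= q, of Omega_k is encoded as (p, n) with      *)
(* q = p + n, so  ipfun x p n = x(p, p + n).                           *)
Definition is_ipath (x : NN k -> NN k -> kpath L) : Prop :=
  [/\ (forall p n, kdeg L (x p n) = n),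
      (forall p, x p (@dzero k) = kvid L (krng L (x p (@dzero k)))),
      (forall p n m, ksrc L (x p n) = krng L (x (dadd p n) m)) &
      (forall p n m, kcomp L (x p n) (x (dadd p n) m) = x p (dadd n m))].

Record ipath := IPath {
  ipfun :> NN k -> NN k -> kpath L;
  ipfunP : is_ipath ipfun
}.

Definition iprng (x : ipath) : kvert L := krng L (x (@dzero k) (@dzero k)).

Definition cyl (a : kpath L) : set ipath :=
  [set x : ipath | x (@dzero k) (kdeg L a) = a].

Lemma shift_subproof (m : NN k) (x : ipath) :
  is_ipath (fun p n => x (dadd p m) n).
Proof.
case: x => f [H1 H2 H3 H4] /=; split.
- by move=> p n; exact: H1.
- by move=> p; exact: H2.
- by move=> p n m'; rewrite daddAC; exact: H3.
- by move=> p n m'; rewrite daddAC; exact: H4.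
Qed.

Definition kshift (m : NN k) (x : ipath) : ipath :=
  IPath (shift_subproof m x).

(* standard prefixing map sigma_lambda : x |-> lambda x, the unique
   infinite kpath y with y(0, d(lambda)) = lambda and sigma^{d(lambda)} y = x.
   Outside its domain Z(s(lambda)) it is (arbitrarily) the identity. *)
Definition kprefix_spec (a : kpath L) (x y : ipath) : Prop :=
  y (@dzero k) (kdeg L a) = a /\ kshift (kdeg L a) y = x.

Definition kprefix (a : kpath L) (x : ipath) : ipath :=
  match pselect (exists y, kprefix_spec a x y) with
  | left H => proj1_sig (cid H)
  | right _ => x
  end.

End KGraphProps.

Arguments ipath {k} L.
Arguments cyl {k L} a.
Arguments kshift {k L} m x.
Arguments kprefix {k L} a x.
Arguments iprng {k L} x.

(* Measurable structure on Lambda^infty: sigma-algebra generated by    *)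
(* the cylinder sets.  A base point x0 is needed because MathComp's     *)
(* measurable types are pointed.                                       *)
Definition ipathP (k : nat) (L : kgraph k) (x0 : ipath L) := ipath L.
Arguments ipathP {k L} x0.

Section PointedInst.
Variables (k : nat) (L : kgraph k) (x0 : ipath L).
HB.instance Definition _ := gen_eqMixin (ipathP x0).
HB.instance Definition _ := gen_choiceMixin (ipathP x0).
HB.instance Definition _ := isPointed.Build (ipathP x0) x0.
End PointedInst.

Definition cylinders (k : nat) (L : kgraph k) (x0 : ipath L) :
  set (set (ipathP x0)) := [set C | exists a : kpath L, C = cyl a].
Arguments cylinders {k L} x0.

Definition IPspace (k : nat) (L : kgraph k) (x0 : ipath L) :=
  g_sigma_algebraType (cylinders x0).
Arguments IPspace {k L} x0.

Section SBFS.
Context {d : measure_display} {X : measurableType d} {R : realType}.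
Variable mu : {measure set X -> \bar R}.
Local Open Scope ereal_scope.

(* "d(mu o tau)/d mu > 0 mu-a.e. on D": mu o tau : E |-> mu (tau E)
   (E measurable, E included in D) is a measure on D having a
   Radon-Nikodym derivative w.r.t. mu, and that derivative is > 0 a.e.
   on D. *)
Definition is_RN_deriv (D : set X) (tau : X -> X) (f : X -> \bar R) : Prop :=
  [/\ measurable_fun D f,
      (forall x, D x -> 0 <= f x) &
      (forall E, measurable E -> E `<=` D ->
         measurable (tau @` E) /\ mu (tau @` E) = \int[mu]_(x in E) f x)].

Definition pos_RN_deriv (D : set X) (tau : X -> X) : Prop :=
  exists f, is_RN_deriv D tau f /\ {ae mu, forall x, D x -> 0 < f x}.

Definition abs_cont_on (D : set X) (tau : X -> X) : Prop :=
  forall E, measurable E -> E `<=` D -> mu E = 0 -> mu (tau @` E) = 0.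

Definition SBFS {I : Type} (J : set I) (D : I -> set X) (tau : I -> X -> X)
  : Prop :=
  [/\ finite_set J,
      (forall i, J i -> measurable (D i) /\ measurable_fun (D i) (tau i)),
      mu.-negligible (~` \bigcup_(i in J) (tau i @` D i)),
      (forall i j, J i -> J j -> i <> j ->
          mu.-negligible (tau i @` D i `&` tau j @` D j)) &
      (forall i, J i -> pos_RN_deriv (D i) (tau i))].

Definition coding_map {I : Type} (J : set I) (D : I -> set X)
  (tau : I -> X -> X) (c : X -> X) : Prop :=
  forall i, J i -> forall x, D i x -> c (tau i x) = x.

Definition Lambda_SBFS {k : nat} (L : kgraph k) (D : kpath L -> set X)
  (tau : kpath L -> X -> X) (code : NN k -> X -> X) : Prop :=
  [/\
      (forall m : NN k,
         SBFS [set a | kdeg L a = m] D tau /\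
         coding_map [set a | kdeg L a = m] D tau (code m)),
      (forall v : kvert L,
         (forall x, D (kvid L v) x -> tau (kvid L v) x = x) /\
         0 < mu (D (kvid L v))),
      (forall a b : kpath L, ksrc L a = krng L b ->
         mu.-negligible (tau b @` D b `\` D a) /\
         {ae mu, forall x, D b x -> tau a (tau b x) = tau (kcomp L a b) x}) &
      (forall (m n : NN k) (x : X), code m (code n x) = code (dadd m n) x)].

End SBFS.

(** Every path is a composite of edges, so each prefixing map sigma_lambda is a
    composite of edge prefixing maps.  Call a map nonsingular on D if it is
    injective on D, maps measurable subsets of D to measurable sets, and
    preserves null sets in both directions; such maps are closed under
    composition, and edge prefixing maps are nonsingular by hypothesis (c),
    because a derivative that is positive almost everywhere reflects null sets.
    For a nonsingular sigma_lambda the measure A |-> p(sigma_lambda(A `&` D))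
    is finite and absolutely continuous w.r.t. p, so the Radon-Nikodym theorem
    produces Phi_lambda, which is positive a.e. because null sets are reflected.
    The remaining axioms are the combinatorics of infinite paths:
    sigma^(d lambda) o sigma_lambda = id, sigma_lambda sigma_nu = sigma_(lambda nu),
    and for fixed m the ranges of the sigma_lambda are the disjoint cylinders
    Z(lambda), which cover the path space. *)

From Pilot Require Import Defs.
From HB Require Import structures.
From mathcomp Require Import all_boot all_order all_algebra.
From mathcomp Require Import all_classical all_reals all_analysis.
From mathcomp Require Import measurable_realfun.
Import Order.TTheory GRing.Theory Num.Theory.
Local Open Scope classical_set_scope.
Local Open Scope ring_scope.
Local Notation dadd := Defs.dadd.
Local Notation kcomp := Defs.kcomp.
Local Notation d0 := (@dzero _).

Section Degrees.
Context {k : nat}.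

Lemma dadd0n (m : NN k) : dadd d0 m = m.
Proof. by apply: functional_extensionality_dep => i; rewrite /dadd add0n. Qed.

Lemma daddn0 (m : NN k) : dadd m d0 = m.
Proof. by apply: functional_extensionality_dep => i; rewrite /dadd addn0. Qed.

Lemma daddC (m n : NN k) : dadd m n = dadd n m.
Proof. by apply: functional_extensionality_dep => i; rewrite /dadd addnC. Qed.

Lemma daddA (m n q : NN k) : dadd (dadd m n) q = dadd m (dadd n q).
Proof. by apply: functional_extensionality_dep => i; rewrite /dadd addnA. Qed.

End Degrees.

Section Factorization.
Context {k : nat} {L : kgraph k}.

Lemma kfactor_uniq {b1 c1 b2 c2 : kpath L} :
  ksrc L b1 = krng L c1 -> ksrc L b2 = krng L c2 ->
  kdeg L b1 = kdeg L b2 -> kdeg L c1 = kdeg L c2 ->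
  kcomp L b1 c1 = kcomp L b2 c2 -> b1 = b2 /\ c1 = c2.
Proof.
move=> s1 s2 d1 d2 e.
have [bc [_ uniq]] := unique_factorization (deg_comp s1).
have := uniq (b2, c2) (And4 s2 (esym d1) (esym d2) e).
by rewrite (uniq (b1, c1) (And4 s1 erefl erefl erefl)) => -[-> ->].
Qed.

Lemma kcomp_injr {a c1 c2 : kpath L} :
  ksrc L a = krng L c1 -> ksrc L a = krng L c2 -> kdeg L c1 = kdeg L c2 ->
  kcomp L a c1 = kcomp L a c2 -> c1 = c2.
Proof. by move=> s1 s2 dc e; case: (kfactor_uniq s1 s2 erefl dc e). Qed.

Lemma kdeg0_vid {a : kpath L} : kdeg L a = d0 -> a = kvid L (krng L a).
Proof.
move=> da; have [] // := @kfactor_uniq a (kvid L (ksrc L a)) (kvid L (krng L a)) a.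
- by rewrite rng_vid.
- by rewrite src_vid.
- by rewrite deg_vid.
- by rewrite deg_vid.
- by rewrite comp_vidl comp_vidr.
Qed.

Lemma kpath_edge_ind (P : kpath L -> Prop) :
  (forall v, P (kvid L v)) ->
  (forall e b, kg_edge e -> ksrc L e = krng L b -> P b -> P (kcomp L e b)) ->
  forall a, P a.
Proof.
move=> Pvid Pcomp a; have [n] := ubnP (\sum_(i < k) kdeg L a i)%N.
elim: n a => // n IH a; rewrite ltnS => size_a.
have [deg_a0|[i deg_ai]] : kdeg L a = d0 \/ exists i, (0 < kdeg L a i)%N.
- case: (pickP (fun i => 0 < kdeg L a i)%N) => [i ?|none]; [by right; exists i|left].
  apply: functional_extensionality_dep => i.
  by have := none i; rewrite lt0n => /negbFE/eqP.
- by rewrite (kdeg0_vid deg_a0).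
pose m j := (kdeg L a j - evec i j)%N.
have da : kdeg L a = dadd (evec i) m.
  apply: functional_extensionality_dep => j; rewrite /dadd /m /evec.
  by case: eqP => [->|_] /=; [rewrite subnKC | rewrite subn0 add0n].
have [[e b] [[/= seb de db eab] _]] := unique_factorization da.
rewrite eab; apply: Pcomp => //; first by exists i.
have evec_sum : (\sum_(j < k) evec i j = 1)%N.
  by rewrite (bigD1 i) //= /evec eqxx big1 // => j /negPf ->.
by apply: IH; move: size_a; rewrite db da /dadd big_split /= evec_sum add1n.
Qed.

End Factorization.

Section InfinitePaths.
Context {k : nat} {L : kgraph k}.
Implicit Types (x y z : ipath L) (a b : kpath L).

Lemma ipath_deg x p n : kdeg L (x p n) = n.
Proof. by case: x => f []. Qed.

Lemma ipath_src x p n m : ksrc L (x p n) = krng L (x (dadd p n) m).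
Proof. by case: x => f []. Qed.

Lemma ipath_comp x p n m : kcomp L (x p n) (x (dadd p n) m) = x p (dadd n m).
Proof. by case: x => f []. Qed.

Lemma ipath_src0 x q r : ksrc L (x d0 q) = krng L (x q r).
Proof. by rewrite (ipath_src x d0 q r) dadd0n. Qed.

Lemma ipath_comp0 x q r : kcomp L (x d0 q) (x q r) = x d0 (dadd q r).
Proof. by rewrite -(ipath_comp x d0 q r) dadd0n. Qed.

Lemma ipath_rng x p n : krng L (x p n) = krng L (x p d0).
Proof.
have := ipath_comp x p d0 n; rewrite daddn0 dadd0n => <-.
by rewrite rng_comp // -{2}(daddn0 p); exact: ipath_src.
Qed.

Lemma ipath_ext x y : (forall q, x d0 q = y d0 q) -> x = y.
Proof.
case: x y => [f fP] [g gP] /= e.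
have fg : f = g.
  apply: functional_extensionality_dep => p.
  apply: functional_extensionality_dep => n.
  have [] // :=
    kfactor_uniq (ipath_src0 (IPath fP) p n) (ipath_src0 (IPath gP) p n).
  - by rewrite !ipath_deg.
  - by rewrite !ipath_deg.
  - by rewrite !ipath_comp0 /= e.
by subst g; congr IPath; exact: Prop_irrelevance.
Qed.

Lemma kshiftD m n x : kshift m (kshift n x) = kshift (dadd m n) x.
Proof. by apply: ipath_ext => q /=; rewrite daddA. Qed.

Lemma kshift0 x : kshift d0 x = x.
Proof. by apply: ipath_ext => q /=; rewrite daddn0. Qed.

Lemma ipath_of_segments {F : NN k -> kpath L} :
  (forall q, kdeg L (F q) = q) ->
  (forall q r, exists u, [/\ ksrc L (F q) = krng L u, kdeg L u = r &
                           F (dadd q r) = kcomp L (F q) u]) ->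
  exists x : ipath L, forall q, x d0 q = F q.
Proof.
move=> Fdeg Fext.
have /choice [X HX] : forall p, exists Xp : NN k -> kpath L, forall n,
    [/\ ksrc L (F p) = krng L (Xp n), kdeg L (Xp n) = n &
        F (dadd p n) = kcomp L (F p) (Xp n)].
  by move=> p; have [Xp HXp] := choice (Fext p); exists Xp.
have Xsrc p n : ksrc L (X p n) = ksrc L (F (dadd p n)).
  by have [s _ ->] := HX p n; rewrite src_comp.
have XP : is_ipath X.
  split.
  - by move=> p n; have [] := HX p n.
  - by move=> p; apply: kdeg0_vid; have [] := HX p d0.
  - by move=> p n m; rewrite Xsrc; have [] := HX (dadd p n) m.
  - move=> p n m; have [s1 _ e1] := HX p n; have [s2 d2 e2] := HX (dadd p n) m.
    have [s3 d3 e3] := HX p (dadd n m).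
    have s12 : ksrc L (X p n) = krng L (X (dadd p n) m) by rewrite Xsrc.
    apply: esym; apply: (kcomp_injr s3).
    + by rewrite rng_comp.
    + by rewrite deg_comp // d2 d3; have [_ -> _] := HX p n.
    + by rewrite Defs.compA // -e1 -e2 -e3 daddA.
exists (IPath XP) => q /=.
have F0 := kdeg0_vid (Fdeg d0).
have [s _ e] := HX d0 q; rewrite dadd0n in e.
have F0_loop : ksrc L (F d0) = krng L (F d0) by rewrite F0 src_vid rng_vid.
by rewrite e F0 -F0_loop s comp_vidl.
Qed.

Lemma cyl_vid_rng {v y} q : cyl (kvid L v) y -> krng L (y d0 q) = v.
Proof. by rewrite /cyl /= deg_vid ipath_rng => ->; rewrite rng_vid. Qed.

(* F q is the degree-q initial segment of a y(0,q); these are the initial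
   segments of the concatenation a y. *)
Section Concatenation.
Context {a : kpath L} {y : ipath L} {F G : NN k -> kpath L}.
Hypothesis y_from_src : forall q, ksrc L a = krng L (y d0 q).
Hypothesis FG_factor : forall q,
  [/\ ksrc L (F q) = krng L (G q), kdeg L (F q) = q, kdeg L (G q) = kdeg L a &
      kcomp L a (y d0 q) = kcomp L (F q) (G q)].

Lemma concat_segment_ext q r : exists u,
  [/\ ksrc L (F q) = krng L u, kdeg L u = r & F (dadd q r) = kcomp L (F q) u].
Proof.
have [sFG _ dG eq] := FG_factor q; have [sFG' dF' dG' eqr] := FG_factor (dadd q r).
have sGy : ksrc L (G q) = krng L (y q r).
  by rewrite -(src_comp sFG) -eq (src_comp (y_from_src q)); exact: ipath_src0.
have dGy : kdeg L (kcomp L (G q) (y q r)) = dadd r (kdeg L a).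
  by rewrite deg_comp // dG ipath_deg daddC.
have [[u v] [[/= suv du dv euv] _]] := unique_factorization dGy.
have sFu : ksrc L (F q) = krng L u by rewrite sFG -(rng_comp sGy) euv rng_comp.
exists u; split => //.
have [] // := kfactor_uniq sFG' (_ : ksrc L (kcomp L (F q) u) = krng L v).
- by rewrite src_comp.
- by rewrite dF' deg_comp // du; have [_ -> _ _] := FG_factor q.
- by rewrite dG' dv.
- rewrite -eqr -ipath_comp0 (Defs.compA (y_from_src q) (ipath_src0 y q r)) eq.
  by rewrite -Defs.compA // euv Defs.compA.
Qed.

Lemma concat_segment_deg : F (kdeg L a) = a.
Proof.
have [s dF dG e] := FG_factor (kdeg L a).
by have [] // := kfactor_uniq s (y_from_src _) _ _ (esym e); rewrite dG ipath_deg.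
Qed.

Lemma concat_segment_shift q : F (dadd (kdeg L a) q) = kcomp L a (y d0 q).
Proof.
rewrite daddC; have [s dF dG e] := FG_factor (dadd q (kdeg L a)).
have s' : ksrc L (kcomp L a (y d0 q)) = krng L (y q (kdeg L a)).
  by rewrite (src_comp (y_from_src q)); exact: ipath_src0.
have [] // := kfactor_uniq s s'.
- by rewrite dF (deg_comp (y_from_src q)) ipath_deg daddC.
- by rewrite dG ipath_deg.
- by rewrite -e -ipath_comp0 (Defs.compA (y_from_src q) (ipath_src0 y q _)).
Qed.

End Concatenation.

Lemma kprefix_spec_exists {a y} : cyl (kvid L (ksrc L a)) y ->
  exists z, kprefix_spec a y z.
Proof.
move=> y_in; have y_from_src q := esym (cyl_vid_rng q y_in).
have /choice [FG HFG] : forall q, exists bc : kpath L * kpath L,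
    [/\ ksrc L bc.1 = krng L bc.2, kdeg L bc.1 = q, kdeg L bc.2 = kdeg L a &
        kcomp L a (y d0 q) = kcomp L bc.1 bc.2].
  move=> q; have dq : kdeg L (kcomp L a (y d0 q)) = dadd q (kdeg L a).
    by rewrite deg_comp // ipath_deg daddC.
  by have [bc [? _]] := unique_factorization dq; exists bc.
have Fdeg q : kdeg L (FG q).1 = q by have [] := HFG q.
have [x xF] := ipath_of_segments Fdeg (concat_segment_ext y_from_src HFG).
have xa : x d0 (kdeg L a) = a by rewrite xF (concat_segment_deg y_from_src HFG).
exists x; split => //; apply: ipath_ext => q /=; rewrite dadd0n.
have xsrc : ksrc L a = krng L (x (kdeg L a) q) by rewrite -{1}xa; exact: ipath_src0.
apply: (kcomp_injr xsrc (y_from_src q)); first by rewrite !ipath_deg.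
by rewrite -{1}xa ipath_comp0 xF (concat_segment_shift y_from_src HFG).
Qed.

Lemma kprefix_spec_segment {a y z} q : kprefix_spec a y z ->
  z d0 (dadd (kdeg L a) q) = kcomp L a (y d0 q).
Proof. by case=> za <-; rewrite -ipath_comp0 za /= dadd0n. Qed.

Lemma kprefix_spec_uniq {a y z1 z2} :
  kprefix_spec a y z1 -> kprefix_spec a y z2 -> z1 = z2.
Proof.
move=> spec1 spec2; apply: ipath_ext => q.
have [] // := kfactor_uniq (ipath_src0 z1 q (kdeg L a)) (ipath_src0 z2 q (kdeg L a)).
- by rewrite !ipath_deg.
- by rewrite !ipath_deg.
- by rewrite !ipath_comp0 daddC (kprefix_spec_segment _ spec1)
    (kprefix_spec_segment _ spec2).
Qed.

Lemma kprefix_specE {a y z} : kprefix_spec a y z -> kprefix a y = z.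
Proof.
move=> spec; rewrite /kprefix; case: pselect => [ex|]; last by case; exists z.
by case: cid => z' spec' /=; exact: kprefix_spec_uniq spec' spec.
Qed.

Section Prefixing.
Context {a : kpath L} {y : ipath L}.
Hypothesis y_in : cyl (kvid L (ksrc L a)) y.

Lemma kprefixP : kprefix_spec a y (kprefix a y).
Proof. by have [z spec] := kprefix_spec_exists y_in; rewrite (kprefix_specE spec). Qed.

Lemma kprefix_cyl : cyl a (kprefix a y).
Proof. by case: kprefixP. Qed.

Lemma kprefixK : kshift (kdeg L a) (kprefix a y) = y.
Proof. by case: kprefixP. Qed.

End Prefixing.

Lemma kprefix_inj {a y1 y2} : cyl (kvid L (ksrc L a)) y1 ->
  cyl (kvid L (ksrc L a)) y2 -> kprefix a y1 = kprefix a y2 -> y1 = y2.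
Proof. by move=> y1_in y2_in e; rewrite -(kprefixK y1_in) -(kprefixK y2_in) e. Qed.

Lemma kprefix_vid v y : cyl (kvid L v) y -> kprefix (kvid L v) y = y.
Proof. by move=> y_in; apply: kprefix_specE; split; rewrite // deg_vid kshift0. Qed.

Lemma cyl_sub_rng a : cyl a `<=` cyl (kvid L (krng L a)).
Proof.
move=> z za; rewrite /cyl /= deg_vid (kdeg0_vid (ipath_deg z d0 d0)).
by rewrite -(ipath_rng z d0 (kdeg L a)) za.
Qed.

Lemma kprefix_comp a b y : ksrc L a = krng L b -> cyl (kvid L (ksrc L b)) y ->
  kprefix (kcomp L a b) y = kprefix a (kprefix b y).
Proof.
move=> ab y_in; have by_in : cyl (kvid L (ksrc L a)) (kprefix b y).
  by rewrite ab; exact: cyl_sub_rng (kprefix_cyl y_in).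
apply: kprefix_specE; split; rewrite deg_comp //.
  by rewrite (kprefix_spec_segment _ (kprefixP by_in)) (kprefix_cyl y_in).
by rewrite daddC -kshiftD !kprefixK.
Qed.

Lemma kshift_cyl_src m x : cyl (kvid L (ksrc L (x d0 m))) (kshift m x).
Proof.
rewrite /cyl /= deg_vid dadd0n (kdeg0_vid (ipath_deg x m d0)).
by rewrite (ipath_src0 x m d0).
Qed.

Lemma kprefix_kshift m x : kprefix (x d0 m) (kshift m x) = x.
Proof. by apply: kprefix_specE; split; rewrite ipath_deg. Qed.

Lemma cyl_disjoint {a b} : kdeg L a = kdeg L b -> a <> b ->
  cyl a `&` cyl b = set0.
Proof.
move=> dab nab; apply/seteqP; split => // z [za zb].
by apply: nab; rewrite -za -zb dab.
Qed.

Lemma kprefix_cover m :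
  \bigcup_(a in [set a | kdeg L a = m]) kprefix a @` cyl (kvid L (ksrc L a)) =
  [set: ipath L].
Proof.
apply/seteqP; split => // x _; exists (x d0 m); first exact: ipath_deg.
by exists (kshift m x); [exact: kshift_cyl_src|exact: kprefix_kshift].
Qed.

End InfinitePaths.

Section NonsingularMaps.
Context {d : measure_display} {X : measurableType d} {R : realType}.
Variable mu : {measure set X -> \bar R}.
Local Open Scope ereal_scope.

Definition nonsingular_embedding (D : set X) (tau : X -> X) : Prop :=
  [/\ measurable D,
      (forall x y, D x -> D y -> tau x = tau y -> x = y),
      (forall E, measurable E -> E `<=` D -> measurable (tau @` E)),
      (forall E, measurable E -> E `<=` D -> mu E = 0 -> mu (tau @` E) = 0) &
      (forall E, measurable E -> E `<=` D -> mu (tau @` E) = 0 -> mu E = 0)].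

Lemma nonsingular_comp {D1 D2 tau1 tau2} :
  nonsingular_embedding D1 tau1 -> nonsingular_embedding D2 tau2 ->
  tau1 @` D1 `<=` D2 -> nonsingular_embedding D1 (tau2 \o tau1).
Proof.
move=> [mD1 inj1 mimg1 null1 rnull1] [mD2 inj2 mimg2 null2 rnull2] img12.
have imgE E : E `<=` D1 -> tau1 @` E `<=` D2.
  by move=> ED1; apply: subset_trans img12; exact: image_subset.
split => //.
- move=> x y D1x D1y /= e; apply: inj1 => //; apply: inj2 => //; apply: img12.
  + by exists x.
  + by exists y.
- move=> E mE ED1; rewrite -image_comp.
  by apply: mimg2; [exact: mimg1|exact: imgE].
- move=> E mE ED1 E0; rewrite -image_comp.
  by apply: null2; [exact: mimg1|exact: imgE|exact: null1].
- move=> E mE ED1 E0; apply: rnull1 => //.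
  by apply: rnull2; [exact: mimg1|exact: imgE|rewrite image_comp].
Qed.

Lemma nonsingular_eq_on {D tau1 tau2} : nonsingular_embedding D tau1 ->
  (forall x, D x -> tau1 x = tau2 x) -> nonsingular_embedding D tau2.
Proof.
move=> [mD inj mimg null rnull] e12.
have imgE E : E `<=` D -> tau1 @` E = tau2 @` E.
  by move=> ED; apply: eq_imagel => x Ex; exact/e12/ED.
split => //.
- by move=> x y Dx Dy; rewrite -!e12 //; exact: inj.
- by move=> E mE ED; rewrite -imgE //; exact: mimg.
- by move=> E mE ED; rewrite -imgE //; exact: null.
- by move=> E mE ED; rewrite -imgE //; exact: rnull.
Qed.

Lemma nonsingular_id {D} : measurable D -> nonsingular_embedding D id.
Proof. by move=> mD; split=> // [E mE _|E mE _|E mE _]; rewrite image_id. Qed.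

Lemma pos_RN_deriv_null {D tau E} : measurable D -> pos_RN_deriv mu D tau ->
  measurable E -> E `<=` D -> mu (tau @` E) = 0 -> mu E = 0.
Proof.
move=> mD [f [[mf f_ge0 RN] [N [mN N0 f_pos]]]] mE ED tauE0.
have [_ tauE] := RN E mE ED.
have : \int[mu]_(x in E) `|f x| = 0.
  rewrite -tauE0 tauE; apply: eq_integral => x /[!inE] Ex.
  by rewrite gee0_abs //; apply: f_ge0; exact: ED.
move/(ae_eq_integral_abs mu mE (measurable_funS mD ED mf)) => [M [mM M0 f0]].
apply/negligibleP => //; exists (M `|` N); split.
- exact: measurableU.
- by transitivity (mu M); [exact: measureU0|].
move=> x Ex; have [fx0|fx0] := eqVneq (f x) 0.
  by right; apply: f_pos => /(_ (ED x Ex)); rewrite fx0 ltxx.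
by left; apply: f0 => /(_ Ex) fx0'; rewrite fx0' eqxx in fx0.
Qed.

End NonsingularMaps.

Section ImageMeasure.
Context {d : measure_display} {X : measurableType d} {R : realType}.
Variable mu : {finite_measure set X -> \bar R}.
Variables (D : set X) (tau : X -> X).
Hypothesis tau_ns : nonsingular_embedding mu D tau.
Local Open Scope ereal_scope.

Definition image_measure (A : set X) := mu (tau @` (A `&` D)).

Let image_measure0 : image_measure set0 = 0.
Proof. by rewrite /image_measure set0I image_set0 measure0. Qed.

Let image_measure_ge0 A : 0 <= image_measure A.
Proof. exact: measure_ge0. Qed.

Let measurable_image A : measurable A -> measurable (tau @` (A `&` D)).
Proof.
by case: tau_ns => mD _ mimg _ _ mA; apply: mimg; [exact: measurableI|exact: subIsetr].
Qed.

Let image_measure_sigma_additive : semi_sigma_additive image_measure.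
Proof.
case: tau_ns => _ inj _ _ _ F mF tF mUF.
rewrite /image_measure setI_bigcupl image_bigcup.
apply: measure_semi_sigma_additive => [n||]; first exact: measurable_image.
- move=> i j _ _ [z [[x [Fix Dx] <-] [y [Fjy Dy] tauyx]]].
  by apply: tF => //; exists x; split => //; rewrite -(inj _ _ Dy Dx tauyx).
- by apply: bigcup_measurable => n _; exact: measurable_image.
Qed.

HB.instance Definition _ := isMeasure.Build _ _ _ image_measure
  image_measure0 image_measure_ge0 image_measure_sigma_additive.

Let image_measure_fin : fin_num_fun image_measure.
Proof. by move=> A mA; apply: fin_num_measure; exact: measurable_image. Qed.

HB.instance Definition _ := Measure_isFinite.Build _ _ _ image_measure image_measure_fin.

Lemma image_measure_ac : image_measure `<< mu.
Proof.
case: tau_ns => mD _ _ null _ N N0 A mA AN; rewrite /image_measure.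
apply: null; [exact: measurableI|exact: subIsetr|].
by apply: N0; [exact: measurableI|by move=> x [Ax _]; exact: AN].
Qed.

Lemma nonsingular_pos_RN_deriv : pos_RN_deriv mu D tau.
Proof.
have [f [f_ge0 intf fE]] := radon_nikodym_finite image_measure_ac.
have mf : measurable_fun setT f := measurable_int _ intf.
case: tau_ns => mD _ mimg _ rnull.
exists f; split.
  split => [|x _|E mE ED]; [exact: measurable_funS mf|exact: f_ge0|].
  split; first exact: mimg.
  by transitivity (image_measure E); [rewrite /image_measure setIidl|exact: fE].
(* f vanishes only on a null set: its image under tau has measure zero. *)
pose N := D `&` f @^-1` [set 0].
have mN : measurable N.
  by apply: measurableI => //; rewrite -[X in measurable X]setTI; exact: mf.
exists N; split => //.
  apply: rnull => //; first exact: subIsetl.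
  transitivity (image_measure N).
    by rewrite /image_measure setIidl //; exact: subIsetl.
  by rewrite fE //; apply: integral0_eq => x [_ ->].
move=> x /= /not_implyP [Dx fx]; split => //=.
by apply/eqP; rewrite eq_le f_ge0 andbT leNgt; exact/negP.
Qed.

End ImageMeasure.

Section PrefixingSBFS.
Variables (R : realType) (k : nat) (L : kgraph k) (x0 : ipath L)
  (p : probability (IPspace x0) R).
Local Notation Dom a := (cyl (kvid L (ksrc L a)) : set (IPspace x0)).
Local Notation tau a := (kprefix a : IPspace x0 -> IPspace x0).

Hypothesis measurable_kprefix : forall a : kpath L, measurable_fun (Dom a) (tau a).
Hypothesis edge_pos_RN_deriv : forall a : kpath L, kg_edge a ->
  abs_cont_on p (Dom a) (tau a) /\ pos_RN_deriv p (Dom a) (tau a).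

Lemma measurable_cyl (a : kpath L) : measurable (cyl a : set (IPspace x0)).
Proof. by apply: sub_sigma_algebra; exists a. Qed.

Lemma kprefix_image_cyl (a : kpath L) : tau a @` Dom a `<=` cyl a.
Proof. by move=> _ [y y_in <-]; exact: kprefix_cyl. Qed.

Lemma nonsingular_kprefix_edge {a : kpath L} : kg_edge a ->
  nonsingular_embedding p (Dom a) (tau a).
Proof.
move=> /edge_pos_RN_deriv [ac RN]; split => //.
- exact: measurable_cyl.
- by move=> y1 y2; exact: kprefix_inj.
- by case: RN => f [[_ _ RN] _] E mE ED; have [] := RN E mE ED.
- by move=> E mE ED; apply: (pos_RN_deriv_null p _ RN mE ED); exact: measurable_cyl.
Qed.

Lemma nonsingular_kprefix (a : kpath L) : nonsingular_embedding p (Dom a) (tau a).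
Proof.
elim/(@kpath_edge_ind _ L): a => [v|e b edge_e eb ns_b].
  apply: (nonsingular_eq_on p (nonsingular_id p (measurable_cyl _))).
  by move=> y; rewrite src_vid => y_in; rewrite kprefix_vid.
rewrite src_comp //; apply: (nonsingular_eq_on p (tau1 := tau e \o tau b)).
  apply: (nonsingular_comp p ns_b (nonsingular_kprefix_edge edge_e)).
  by rewrite eb; apply: subset_trans (kprefix_image_cyl b) (cyl_sub_rng b).
by move=> y y_in; rewrite /= kprefix_comp.
Qed.

Lemma kprefix_SBFS (m : NN k) : finite_set [set a : kpath L | kdeg L a = m] ->
  SBFS p [set a | kdeg L a = m] (fun a => Dom a) (fun a => tau a).
Proof.
move=> fin_m; split => //.
- by move=> a _; split; [exact: measurable_cyl|exact: measurable_kprefix].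
- by rewrite kprefix_cover setCT; exact: negligible_set0.
- move=> a b /= da db ab; apply: (negligibleS _ (negligible_set0 p)).
  rewrite -(cyl_disjoint (etrans da (esym db)) ab).
  by apply: setISS; exact: kprefix_image_cyl.
- by move=> a _; apply: nonsingular_pos_RN_deriv; exact: nonsingular_kprefix.
Qed.

End PrefixingSBFS.

Theorem mainTheorem6 (R : realType) (k : nat) (L : kgraph k) (x0 : ipath L)
  (p : probability (IPspace x0) R) :
  kg_finite L -> kg_strongly_connected L -> kg_no_sources L ->
  (forall a : kpath L,
     measurable_fun (cyl (kvid L (ksrc L a)) : set (IPspace x0))
       (kprefix a : IPspace x0 -> IPspace x0)) ->
  (forall n : NN k,
     measurable_fun (setT : set (IPspace x0))
       (kshift n : IPspace x0 -> IPspace x0)) ->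
  (forall v : kvert L, (0 < p (cyl (kvid L v) : set (IPspace x0)))%E) ->
  (forall a : kpath L, kg_edge a ->
     abs_cont_on p (cyl (kvid L (ksrc L a))) (kprefix a) /\
     pos_RN_deriv p (cyl (kvid L (ksrc L a))) (kprefix a)) ->
  Lambda_SBFS p (fun a : kpath L => (cyl (kvid L (ksrc L a)) : set (IPspace x0)))
                (fun a : kpath L => (kprefix a : IPspace x0 -> IPspace x0))
                (fun n : NN k => (kshift n : IPspace x0 -> IPspace x0)).
Proof.
move=> fin _ _ measurable_kprefix _ pos_cyl edge_RN; split.
- move=> m; split; first exact: kprefix_SBFS measurable_kprefix edge_RN m (fin m).
  by move=> a /= <- y y_in; exact: kprefixK.
- by move=> v; rewrite src_vid; split => [y|]; [exact: kprefix_vid|exact: pos_cyl].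
- move=> a b ab; split; last by apply: aeW => y y_in; rewrite kprefix_comp.
  apply: (negligibleS _ (negligible_set0 p)) => _ [[y y_in <-] not_in_a].
  by apply: not_in_a; rewrite ab; exact: cyl_sub_rng (kprefix_cyl y_in).
- by move=> m n x; exact: kshiftD.
Qed.
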